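(* Let $\mathbf{v}_1,\ldots,\mathbf{v}_k$ be orthogonal unit vectors in $\mathbb{R}^k$, let $F:\mathbb{R}^{kn}\to\mathbb{R}$ be \[ F(\mathbf{w}_1,\ldots,\mathbf{w}_n)=\mathbb{E}_{\mathbf{x}\sim\mathcal{N}(\mathbf{0},I_k)}\left[\frac{1}{2}\left(\sum_{i=1}^{n}[\mathbf{w}_i^\top\mathbf{x}]_+-\sum_{i=1}^{k}[\mathbf{v}_i^\top\mathbf{x}]_+\right)^2\right], \] and let $\mathbf{w}\in\mathbb{R}^{kn}$ and $\alpha>0$ be such that $F$ is thrice differentiable on an open set containing the closed ball of radius $\alpha$ centered at $\mathbf{w}$. For a unit vector $\mathbf{u}\in\mathbb{R}^{kn}$ and $t\in(0,\alpha]$, let $R_{\mathbf{w},\mathbf{u},t}$ be the Lagrange remainder, i.e. the number with \[ F(\mathbf{w}+t\mathbf{u})=F(\mathbf{w})+t\nabla F(\mathbf{w})^\top\mathbf{u}+\tfrac{1}{2}t^2\mathbf{u}^\top\nabla^2F(\mathbf{w})\mathbf{u}+\tfrac{1}{6}t^3R_{\mathbf{w},\mathbf{u},t} \] (by Taylor's theorem $R_{\mathbf{w},\mathbf{u},t}=\sum_{i_1,i_2,i_3}\frac{\partial^3 F}{\partial w_{i_1}\partial w_{i_2}\partial w_{i_3}}(\mathbf{w}+\xi\mathbf{u})u_{i_1}u_{i_2}u_{i_3}$ for some $\xi\in(0,t)$). Assume that for some $\epsilon,B>0$ we have $\|\nabla F(\mathbf{w})\|\le\epsilon$ and $\sup_{t\in(0,\alpha],\,\|\mathbf{u}\|=1}|R_{\mathbf{w},\mathbf{u},t}|\le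 B$. Let $\lambda_{\min}>0$ be the smallest eigenvalue of $\nabla^2F(\mathbf{w})$ (assumed positive), and let \[ r=\frac{3\lambda_{\min}-\sqrt{9\lambda_{\min}^2-25B\epsilon}}{2B}. \] If $9\lambda_{\min}^2-25B\epsilon\ge 0$ and $r<\alpha$, then $F$ has a local minimum at distance at most $r$ from $\mathbf{w}$.
   Context: $[z]_+=\max\{0,z\}$. A local minimum of $F$ is a point $\mathbf{w}^*$ with $F(\mathbf{w}^* )\le F(\mathbf{w}')$ for all $\mathbf{w}'$ in some open neighborhood of $\mathbf{w}^*$. Norms are Euclidean. *)

From HB Require Import structures.
From mathcomp Require Import all_boot all_order all_algebra.
From mathcomp Require Import all_classical all_reals all_analysis.
From mathcomp Require Import normal_distribution.
Set Implicit Arguments. Unset Strict Implicit. Unset Printing Implicit Defensive.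
Import Order.TTheory GRing.Theory Num.Theory.
Import numFieldNormedType.Exports.
Local Open Scope classical_set_scope.
Local Open Scope ring_scope.

Section Defs.
Variable R : realType.

Definition relu (z : R) : R := Num.max 0 z.

(* Expectation of a nonnegative (extended-real valued) function of
   x ~ N(0, I_k), x represented as a k-tuple of reals; computed as the
   iterated integral against k independent standard normal laws
   (equal to the integral against the product measure by Tonelli). *)
Fixpoint gauss_int (k : nat) : (k.-tuple R -> \bar R) -> \bar R :=
  match k with
  | 0 => fun g => g [tuple]
  | k'.+1 => fun g =>
      (\int[normal_prob 0 1]_x gauss_int (fun t : k'.-tuple R => g [tuple of x :: t]))%E
  end.

Definition dotx (k : nat) (w : 'rV[R]_k) (x : k.-tuple R) : R :=
  \sum_(j < k) w 0 j * tnth x j.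

Definition Fobj (k n : nat) (v : 'M[R]_(k, k)) (w : 'M[R]_(n, k)) : R :=
  fine (gauss_int (fun x : k.-tuple R =>
    (2^-1 * (\sum_(i < n) relu (dotx (row i w) x)
             - \sum_(i < k) relu (dotx (row i v) x)) ^+ 2)%:E)).

Definition enorm (m p : nat) (M : 'M[R]_(m, p)) : R :=
  Num.sqrt (\sum_(i < m) \sum_(j < p) M i j ^+ 2).

Definition grad (m p : nat) (F : 'M[R]_(m, p) -> R) (w : 'M[R]_(m, p))
  : 'M[R]_(m, p) := \matrix_(i, j) ('D_(delta_mx i j) F w).

Definition mdot (m p : nat) (A B : 'M[R]_(m, p)) : R :=
  \sum_(i < m) \sum_(j < p) A i j * B i j.

Definition ebasis (m p : nat) (a : 'I_(m * p)) : 'M[R]_(m, p) :=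
  vec_mx (delta_mx 0 a).

Definition hess (m p : nat) (F : 'M[R]_(m, p) -> R) (w : 'M[R]_(m, p))
  : 'M[R]_(m * p) :=
  \matrix_(a, b) ('D_(ebasis b) ('D_(ebasis a) F) w).

Definition quadf (m p : nat) (H : 'M[R]_(m * p)) (u : 'M[R]_(m, p)) : R :=
  (mxvec u *m H *m (mxvec u)^T) 0 0.

(* In finite dimension,
   differentiability of x |-> DF(x) is equivalent to differentiability of
   x |-> DF(x) u for each u, and similarly at order 3. *)
Definition thrice_diff_on (m p : nat) (F : 'M[R]_(m, p) -> R)
  (U : set 'M[R]_(m, p)) : Prop :=
  forall x, U x ->
    [/\ differentiable F x,
        (forall u, differentiable ('D_u F) x) &
        (forall u1 u2, differentiable ('D_u2 ('D_u1 F)) x)].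

(* Lagrange remainder R_{w,u,t}, defined by
   F(w+tu) = F(w) + t grad.u + 1/2 t^2 u^T H u + 1/6 t^3 R *)
Definition lagrange_rem (m p : nat) (F : 'M[R]_(m, p) -> R)
  (w u : 'M[R]_(m, p)) (t : R) : R :=
  6 / t ^+ 3 * (F (w + t *: u) - F w - t * mdot (grad F w) u
                - 2^-1 * t ^+ 2 * quadf (hess F w) u).

Definition local_min (m p : nat) (F : 'M[R]_(m, p) -> R) (ws : 'M[R]_(m, p))
  : Prop :=
  exists2 delta : R, 0 < delta &
    forall w', enorm (w' - ws) < delta -> F ws <= F w'.

End Defs.

From HB Require Import structures.
From mathcomp Require Import all_boot all_order all_algebra.
From mathcomp Require Import all_classical all_reals all_analysis.
From mathcomp Require Import ring lra.
Import Order.TTheory GRing.Theory Num.Theory.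
Import numFieldNormedType.Exports.
Local Open Scope classical_set_scope.
Local Open Scope ring_scope.
Set Implicit Arguments. Unset Strict Implicit. Unset Printing Implicit Defensive.

(* Let r = (3 lam - sqrt (9 lam^2 - 25 B eps)) / (2 B) and H = hess F w.  Taylor's
   formula with the Lagrange remainder gives, for every unit u,
     F (w + r u) - F w >= - r eps + r^2 lam / 2 - r^3 B / 6,
   where u^T H u >= lam |u|^2 because H is symmetric (Schwarz's theorem on mixed
   partial derivatives) and every eigenvalue of H is at least lam (a minimiser of
   the Rayleigh quotient on the unit sphere is an eigenvector).  Since r is the
   smaller root of B r^2 - 3 lam r + 25 eps / 4, the right-hand side equals
   r eps / 24 > 0: F is larger on the sphere of radius r than at its centre, so a
   minimiser of F on the compact closed ball lies in the open ball and is a local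
   minimum. *)

Lemma sum_mul_sqr_le (R : realFieldType) (I : finType) (a b : I -> R) :
  (\sum_i a i * b i) ^+ 2 <= (\sum_i a i ^+ 2) * (\sum_i b i ^+ 2).
Proof.
have lagrange : \sum_i \sum_j (a i * b j - a j * b i) ^+ 2 =
    2 * ((\sum_i a i ^+ 2) * (\sum_i b i ^+ 2) - (\sum_i a i * b i) ^+ 2).
  have -> : \sum_i \sum_j (a i * b j - a j * b i) ^+ 2 =
      \sum_i \sum_j (a i ^+ 2 * b j ^+ 2) + \sum_i \sum_j (a j ^+ 2 * b i ^+ 2)
      - 2 * \sum_i \sum_j (a i * b i) * (a j * b j).
    rewrite mulr_sumr -!big_split -sumrB /=; apply: eq_bigr => i _.
    by rewrite mulr_sumr -!big_split -sumrB /=; apply: eq_bigr => j _; ring.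
  rewrite [X in _ + X - _]exchange_big /= expr2 !mulr_suml.
  under [X in _ = 2 * (_ - X)]eq_bigr do rewrite mulr_sumr.
  under [X in _ = 2 * (X - _)]eq_bigr do rewrite mulr_sumr.
  ring.
have : 0 <= \sum_i \sum_j (a i * b j - a j * b i) ^+ 2.
  by do 2!(apply: sumr_ge0 => ? _); exact: sqr_ge0.
by rewrite lagrange pmulr_rge0 // subr_ge0.
Qed.

Section FrobeniusNorm.
Variables (R : realType) (m p : nat).
Implicit Types A B : 'M[R]_(m, p).

Lemma mdot_ge0 A : 0 <= mdot A A.
Proof. by do 2!(apply: sumr_ge0 => ? _); exact: sqr_ge0. Qed.

Lemma mdot_eq0 A : mdot A A = 0 -> A = 0.
Proof.
move=> /eqP; rewrite psumr_eq0 => [/allP A0|i _]; last first.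
  by apply: sumr_ge0 => j _; rewrite -expr2 sqr_ge0.
apply/matrixP => i j; rewrite mxE.
move: (A0 i (mem_index_enum _)); rewrite psumr_eq0 => [/allP/(_ j)|j' _]; last first.
  by rewrite -expr2 sqr_ge0.
by rewrite mem_index_enum mulf_eq0 orbb => /(_ isT)/eqP.
Qed.

Lemma sqr_enorm A : enorm A ^+ 2 = mdot A A.
Proof. exact/sqr_sqrtr/mdot_ge0. Qed.

Lemma enorm_ge0 A : 0 <= enorm A.
Proof. exact: sqrtr_ge0. Qed.

Lemma mdotDD A B : mdot (A + B) (A + B) = mdot A A + 2 * mdot A B + mdot B B.
Proof.
rewrite /mdot mulr_sumr -!big_split /=; apply: eq_bigr => i _.
by rewrite mulr_sumr -!big_split /=; apply: eq_bigr => j _; rewrite !mxE; ring.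
Qed.

Lemma mdotZZ c A : mdot (c *: A) (c *: A) = c ^+ 2 * mdot A A.
Proof.
rewrite /mdot mulr_sumr; apply: eq_bigr => i _; rewrite mulr_sumr.
by apply: eq_bigr => j _; rewrite !mxE; ring.
Qed.

Lemma mdot_CauchySchwarz A B : mdot A B ^+ 2 <= mdot A A * mdot B B.
Proof. by rewrite /mdot !pair_bigA; exact: sum_mul_sqr_le. Qed.

Lemma ler_mdot_enorm A B : `|mdot A B| <= enorm A * enorm B.
Proof.
rewrite -sqrtrM ?mdot_ge0 // -sqrtr_sqr.
exact/ler_wsqrtr/mdot_CauchySchwarz.
Qed.

Lemma enormD A B : enorm (A + B) <= enorm A + enorm B.
Proof.
rewrite -ler_sqr ?nnegrE ?enorm_ge0 ?addr_ge0 ?enorm_ge0 //.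
rewrite sqrrD !sqr_enorm mdotDD lerD2r lerD2l -mulr_natl.
have := ler_mdot_enorm A B; have := ler_norm (mdot A B); lra.
Qed.

Lemma enormZ c A : enorm (c *: A) = `|c| * enorm A.
Proof. by rewrite /enorm -/(mdot _ _) mdotZZ sqrtrM ?sqr_ge0 // sqrtr_sqr. Qed.

Lemma enorm0 : enorm (0 : 'M[R]_(m, p)) = 0.
Proof. by rewrite -(scale0r 0) enormZ normr0 mul0r. Qed.

Lemma ler_entry_enorm A i j : `|A i j| <= enorm A.
Proof.
rewrite -sqrtr_sqr; apply: ler_wsqrtr.
rewrite /mdot (bigD1 i) //= (bigD1 j) //= -addrA lerDl.
by rewrite addr_ge0 ?sumr_ge0 // => *; rewrite ?sqr_ge0 // sumr_ge0 // => *; rewrite sqr_ge0.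
Qed.

Lemma mdot_mxvec A B : mdot (mxvec A) (mxvec B) = mdot A B.
Proof.
rewrite /mdot big_ord1 (reindex (uncurry (@mxvec_index m p))) /=.
  by rewrite pair_bigA; apply: eq_bigr => -[i j] _; rewrite !mxvecE.
exact: curry_mxvec_bij.
Qed.

End FrobeniusNorm.

Section RealContinuity.
Variables (R : realType) (T : topologicalType).

Lemma continuous_sum (I : finType) (f : I -> T -> R) :
  (forall i, continuous (f i)) -> continuous (fun x => \sum_i f i x).
Proof. by move=> fc; apply: continuous_big => //; exact: add_continuous. Qed.

Lemma continuous_mul (f g : T -> R) :
  continuous f -> continuous g -> continuous (fun x => f x * g x).
Proof. by move=> fc gc x; exact: (continuousM (fc x) (gc x)). Qed.

End RealContinuity.

Section FrobeniusTopology.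
Variables (R : realType) (m p : nat).

Lemma continuous_enorm : continuous (@enorm R m p).
Proof.
move=> A; apply: (continuous_comp _ (@sqrt_continuous R _)).
apply: continuous_sum => i; apply: continuous_sum => j.
by apply: continuous_mul; exact: coord_continuous.
Qed.

Lemma ler_norm_vec_mx (y : 'rV[R]_(m * p)) : `|vec_mx y| <= `|y|.
Proof.
rewrite [leLHS]mx_normrE; apply: bigmax_le => [|[i j] _ /=]; first exact: normr_ge0.
by rewrite mxE [leRHS]mx_normrE; apply/bigmax_geP; right; exists (0, mxvec_index i j).
Qed.

Lemma continuous_vec_mx : continuous (@vec_mx R m p).
Proof.
move=> y; apply/(@cvgrPdist_lt _ _ _ (nbhs y)) => e e0; near=> z.
rewrite -raddfB; apply: le_lt_trans (ler_norm_vec_mx _) _.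
by near: z; exact: cvgr_dist_lt.
Unshelve. all: by end_near. Qed.

Lemma compact_enorm_ball (w : 'M[R]_(m, p)) r :
  compact [set x | enorm (x - w) <= r].
Proof.
(* Heine-Borel is available for row vectors only: transport through vec_mx. *)
pose K := [set y : 'rV[R]_(m * p) | enorm (vec_mx y - w) <= r].
have -> : [set x | enorm (x - w) <= r] = vec_mx @` K.
  apply/seteqP; split => [x xr | _ [y Ky <-] //].
  by exists (mxvec x); rewrite /K /= mxvecK.
apply: continuous_compact; first exact/continuous_subspaceT/continuous_vec_mx.
apply: bounded_closed_compact.
  exists (r + enorm w); split; first exact: num_real.
  move=> M rwM y /= Ky.
  have yM : enorm (vec_mx y) <= M.
    apply: le_trans (ltW rwM); apply: le_trans (lerD Ky (lexx _)).
    by rewrite -[X in enorm X](subrK w) enormD.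
  rewrite [leLHS]mx_normrE; apply: bigmax_le => [|[i a] _ /=].
    exact: le_trans (enorm_ge0 _) yM.
  rewrite (ord1 i); case: (mxvec_indexP a) => i' j'.
  by rewrite -[y]vec_mxK mxvecE; exact: le_trans (ler_entry_enorm _ _ _) yM.
have cont : continuous (fun y : 'rV[R]_(m * p) => enorm (vec_mx y - w)).
  move=> y; apply: (@continuous_comp _ _ _ (fun y => vec_mx y - w) (@enorm R m p)).
    by apply: continuousB; [exact: continuous_vec_mx | exact: cst_continuous].
  exact: continuous_enorm.
by move: cont; rewrite continuous_closedP => /(_ _ (closed_le (y := r))).
Qed.

End FrobeniusTopology.

Lemma local_min_of_sphere_gt (R : realType) (m p : nat) (F : 'M[R]_(m, p) -> R)
    (w : 'M[R]_(m, p)) (r : R) :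
  0 < r ->
  (forall x, enorm (x - w) <= r -> {for x, continuous F}) ->
  (forall x, enorm (x - w) = r -> F w < F x) ->
  exists2 ws, enorm (ws - w) < r & local_min F ws.
Proof.
move=> r0 Fc Fsphere; set K := [set x | enorm (x - w) <= r].
have Kw : K w by rewrite /K /= subrr enorm0 ltW.
have FKc : {within K, continuous F}.
  by apply: continuous_in_subspaceT => x /set_mem; exact: Fc.
have Kcompact : compact K by exact: compact_enorm_ball.
have [c /set_mem Kc cmin] := compact_EVT_min (ex_intro K w Kw) Kcompact FKc.
have cr : enorm (c - w) < r.
  rewrite lt_neqAle Kc andbT; apply/negP => /eqP/Fsphere.
  by have := cmin w (mem_set Kw); lra.
exists c => //; exists (r - enorm (c - w)); first by rewrite subr_gt0.
move=> x xc; apply/cmin/mem_set; rewrite /K /=.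
by have := enormD (x - c) (c - w); rewrite addrA subrK; lra.
Qed.

Lemma mvt_interval (R : realType) (g dg : R -> R) (s : R) : 0 < s ->
  (forall x, 0 <= x <= s -> is_derive x 1 g (dg x)) ->
  exists2 c, 0 < c < s & g s - g 0 = s * dg c.
Proof.
move=> s0 gd.
have gd' x : x \in `]0, s[ -> is_derive x 1 g (dg x).
  by rewrite in_itv /= => /andP[x0 xs]; apply: gd; rewrite !ltW.
have gc : {within `[0, s], continuous g}.
  apply: derivable_within_continuous => x; rewrite in_itv /= => xs.
  by have [] := gd x xs.
have [c] := MVT s0 gd' gc; rewrite in_itv /= subr0 mulrC => cs E.
by exists c.
Qed.

Section MixedPartials.
Variables (R : realType) (V : normedModType R).

Lemma is_derive_along_line (G : V -> R) (x a : V) (t : R) :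
  differentiable G (x + t *: a) ->
  is_derive t 1 (fun s => G (x + s *: a)) ('D_a G (x + t *: a)).
Proof.
move=> dG.
have E : (fun h : R => h^-1 *: (((fun s => G (x + s *: a)) \o shift t) (h *: 1)
             - G (x + t *: a))) =
         (fun h : R => h^-1 *: ((G \o shift (x + t *: a)) (h *: a)
             - G (x + t *: a))).
  apply/funext => h /=; congr (_ *: (G _ - _)).
  by rewrite /shift /= scalerDl [h *: 1]mulr1 addrCA addrA.
have D : derivable G (x + t *: a) a by apply: diff_derivable.
by split; rewrite /derivable /derive E.
Qed.

Lemma second_difference_mvt (F : V -> R) (w a b : V) (s : R) : 0 < s ->
  (forall x y, 0 <= x <= s -> 0 <= y <= s ->
     differentiable F (w + x *: a + y *: b) /\
     differentiable ('D_a F) (w + x *: a + y *: b)) ->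
  exists x y, [/\ 0 < x < s, 0 < y < s &
    F (w + s *: a + s *: b) - F (w + s *: a) - F (w + s *: b) + F w =
    s ^+ 2 * 'D_b ('D_a F) (w + x *: a + y *: b)].
Proof.
move=> s0 dF.
have swap x y : w + y *: b + x *: a = w + x *: a + y *: b by rewrite addrAC.
have s_in : 0 <= s <= s by rewrite lexx ltW.
have zero_in : 0 <= (0 : R) <= s by rewrite lexx ltW.
pose g x := F (w + s *: b + x *: a) - F (w + 0 *: b + x *: a).
pose dg x := 'D_a F (w + s *: b + x *: a) - 'D_a F (w + 0 *: b + x *: a).
have [x xs Ex] : exists2 x, 0 < x < s & g s - g 0 = s * dg x.
  apply: (mvt_interval s0) => x xs.
  by apply: is_deriveB; apply: is_derive_along_line; rewrite swap;
    [have [] := dF x s xs s_in | have [] := dF x 0 xs zero_in].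
have x_in : 0 <= x <= s by case/andP: xs => *; rewrite !ltW.
pose h y := 'D_a F (w + x *: a + y *: b).
have [y ys Ey] : exists2 y, 0 < y < s &
    h s - h 0 = s * 'D_b ('D_a F) (w + x *: a + y *: b).
  apply: (mvt_interval s0) => y y_in.
  by apply: (@is_derive_along_line ('D_a F) (w + x *: a) b y); have [] := dF x y x_in y_in.
exists x, y; split => //.
rewrite /g /dg (swap s s) (swap x s) (swap x 0) -/(h s) -/(h 0) Ey in Ex.
move: Ex; rewrite !scale0r !addr0 expr2 -mulrA => <-; ring.
Qed.

Lemma ball_parallelogram (w c1 c2 : V) (d s x y : R) :
  s * (`|c1| + `|c2|) < d -> 0 <= x <= s -> 0 <= y <= s ->
  ball w d (w + x *: c1 + y *: c2).
Proof.
move=> sd /andP[x0 xs] /andP[y0 ys].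
rewrite -ball_normE /ball_ /= -addrA opprD addrA subrr add0r normrN.
apply: le_lt_trans (ler_normD _ _) _; apply: le_lt_trans sd.
rewrite !normrZ !ger0_norm // mulrDr.
by apply: lerD; apply: ler_wpM2r.
Qed.

Lemma derive_mixed_sym (F : V -> R) (w a b : V) :
  (\forall z \near w, [/\ differentiable F z, differentiable ('D_a F) z
                           & differentiable ('D_b F) z]) ->
  {for w, continuous ('D_b ('D_a F))} -> {for w, continuous ('D_a ('D_b F))} ->
  'D_b ('D_a F) w = 'D_a ('D_b F) w.
Proof.
(* Near w, f1 and f2 both take the value (second difference) / s^2 at some
   point of the parallelogram spanned by s a and s b. *)
move=> dF c1 c2; set f1 := 'D_b ('D_a F); set f2 := 'D_a ('D_b F).
apply/eqP; rewrite -subr_eq0 -normr_le0; apply/ler_addgt0Pr => e e0.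
rewrite add0r; have e20 : 0 < e / 2 by rewrite divr_gt0.
have /nbhs_ballP[d d0 near_w] : \forall z \near w,
    [/\ differentiable F z, differentiable ('D_a F) z
       & differentiable ('D_b F) z] /\
    `|f1 w - f1 z| < e / 2 /\ `|f2 w - f2 z| < e / 2.
  apply/near_andP; split => //; apply/near_andP.
  by split; [exact: cvgr_dist_lt _ c1 _ e20 | exact: cvgr_dist_lt _ c2 _ e20].
set s := d / (`|a| + `|b| + 1).
have ab0 : 0 < `|a| + `|b| + 1 by rewrite ltr_wpDl // addr_ge0.
have s0 : 0 < s by rewrite divr_gt0.
have sab : s * (`|a| + `|b|) < d.
  by rewrite /s mulrAC ltr_pdivrMr // ltr_pM2l // ltrDl.
have sba : s * (`|b| + `|a|) < d by rewrite addrC.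
have weaken x : 0 < x < s -> 0 <= x <= s by case/andP => *; rewrite !ltW.
have [|x1 [y1 [/weaken x1s /weaken y1s E1]]] := @second_difference_mvt F w a b s s0.
  by move=> x y xs ys; have [[]] := near_w _ (ball_parallelogram w sab xs ys).
have [|x2 [y2 [/weaken x2s /weaken y2s E2]]] := @second_difference_mvt F w b a s s0.
  by move=> x y xs ys; have [[]] := near_w _ (ball_parallelogram w sba xs ys).
have [_ [near1 _]] := near_w _ (ball_parallelogram w sab x1s y1s).
have [_ [_ near2]] := near_w _ (ball_parallelogram w sba x2s y2s).
have f12 : f1 (w + x1 *: a + y1 *: b) = f2 (w + x2 *: b + y2 *: a).
  rewrite (addrAC w (s *: b)) (addrAC (F (w + s *: a + s *: b))) E1 in E2.
  by apply: mulfI E2; rewrite expf_neq0 // gt_eqF.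
have : `|f1 w - f2 w| <= `|f1 w - f1 (w + x1 *: a + y1 *: b)|
                         + `|f2 w - f2 (w + x2 *: b + y2 *: a)|.
  by rewrite f12; have := ler_normB (f1 w - f2 (w + x2 *: b + y2 *: a))
    (f2 w - f2 (w + x2 *: b + y2 *: a)); rewrite opprB addrA subrK.
move/le_trans; apply; rewrite [leRHS]splitr.
exact: lerD (ltW near1) (ltW near2).
Qed.

End MixedPartials.

Lemma hess_sym (R : realType) (m p : nat) (F : 'M[R]_(m, p) -> R)
    (U : set 'M[R]_(m, p)) (w : 'M[R]_(m, p)) :
  open U -> U w -> thrice_diff_on F U -> (hess F w)^T = hess F w.
Proof.
move=> oU Uw dU; apply/matrixP => a b; rewrite !mxE.
have nearU : \forall z \near w, U z by move: oU; rewrite openE => /(_ w Uw).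
apply: derive_mixed_sym.
- apply: filterS nearU => z /dU[dFz dDFz _].
  by split; [exact: dFz | exact: dDFz | exact: dDFz].
- by have [_ _ dD2F] := dU w Uw; exact/differentiable_continuous/dD2F.
- by have [_ _ dD2F] := dU w Uw; exact/differentiable_continuous/dD2F.
Qed.

Lemma quad_ge0_linear_coef_eq0 (R : realFieldType) (e f : R) :
  (forall s, 0 <= 2 * s * e + s ^+ 2 * f) -> e = 0.
Proof.
move=> q; set t := `|f| + 1.
have t0 : 0 < t by rewrite ltr_wpDl.
have ft : f < 2 * t by rewrite /t; have := ler_norm f; have := normr_ge0 f; lra.
have : 0 <= e ^+ 2 * (f - 2 * t).
  have := q (- e / t); rewrite -(pmulr_rge0 _ (exprn_gt0 2 t0)).
  by congr (_ <= _); field; rewrite gt_eqF.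
rewrite mulrC nmulr_rge0 ?subr_lt0 // => e2_le0.
by apply/eqP; rewrite -sqrf_eq0 eq_le e2_le0 sqr_ge0.
Qed.

Section QuadraticForms.
Variables (R : realType) (N : nat).
Implicit Types (M H : 'M[R]_N) (x y h : 'rV[R]_N).

Definition bform M x y := (x *m M *m y^T) 0 0.

Lemma bformE M x y : bform M x y = mdot (x *m M) y.
Proof.
by rewrite /bform /mdot big_ord1 mxE; apply: eq_bigr => j _; rewrite [y^T _ _]mxE.
Qed.

Lemma bform_sum M x y : bform M x y = \sum_a \sum_b x 0 a * M a b * y 0 b.
Proof.
rewrite /bform mxE exchange_big; apply: eq_bigr => b _.
by rewrite !mxE mulr_suml; apply: eq_bigr => a _.
Qed.

Lemma bformC M x y : M^T = M -> bform M x y = bform M y x.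
Proof.
move=> MT; have -> : bform M x y = ((x *m M *m y^T)^T) 0 0 by rewrite mxE.
by rewrite !trmx_mul trmxK MT mulmxA.
Qed.

Lemma bform_expand M x h (s : R) : M^T = M ->
  bform M (x + s *: h) (x + s *: h) =
  bform M x x + 2 * s * bform M x h + s ^+ 2 * bform M h h.
Proof.
move=> MT; have -> : bform M (x + s *: h) (x + s *: h) =
    bform M x x + s * bform M x h + s * bform M h x + s ^+ 2 * bform M h h.
  rewrite !bform_sum !mulr_sumr -!big_split /=; apply: eq_bigr => a _.
  rewrite !mulr_sumr -!big_split /=; apply: eq_bigr => b _.
  by rewrite !mxE; ring.
by rewrite [bform M h x]bformC //; ring.
Qed.

Lemma bformZZ M c x : bform M (c *: x) (c *: x) = c ^+ 2 * bform M x x.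
Proof.
rewrite /bform linearZ /= -scalemxAl -scalemxAl -scalemxAr.
by rewrite 2!mxE mulrA -expr2.
Qed.

Lemma bform0l M y : bform M 0 y = 0.
Proof. by rewrite /bform !mul0mx mxE. Qed.

Lemma bform1 x y : bform 1%:M x y = mdot x y.
Proof. by rewrite bformE mulmx1. Qed.

Lemma bform_subscalar M c x y :
  bform (M - c%:M) x y = bform M x y - c * mdot x y.
Proof.
rewrite -bform1 /bform mulmxBr mulmxBl mul_mx_scalar -scalemxAl mulmx1.
by rewrite mxE; congr (_ + _); rewrite 2!mxE.
Qed.

Lemma continuous_bform M : continuous (fun x => bform M x x).
Proof.
have -> : (fun x => bform M x x) =
    (fun x => \sum_a \sum_b x 0 a * M a b * x 0 b).
  by apply/funext => x; rewrite bform_sum.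
apply: continuous_sum => a; apply: continuous_sum => b.
apply: continuous_mul; last exact: coord_continuous.
by apply: continuous_mul; [exact: coord_continuous | exact: cst_continuous].
Qed.

Lemma bform_psd_kernel M x : M^T = M -> (forall y, 0 <= bform M y y) ->
  bform M x x = 0 -> x *m M = 0.
Proof.
move=> MT psd x0.
have orth h : bform M x h = 0.
  apply: (@quad_ge0_linear_coef_eq0 _ _ (bform M h h)) => s.
  by have := psd (x + s *: h); rewrite bform_expand // x0 add0r.
by apply: mdot_eq0; rewrite -bformE.
Qed.

End QuadraticForms.

Section Rayleigh.
Variables (R : realType) (N : nat) (H : 'M[R]_N).

Lemma enorm_gt0 (x : 'rV[R]_N) : x != 0 -> 0 < enorm x.
Proof.
move=> x0; rewrite lt_def enorm_ge0 andbT; apply: contraNneq x0 => ex0.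
by apply/eqP/mdot_eq0; rewrite -sqr_enorm ex0 expr0n.
Qed.

Lemma bform_min_on_sphere (x : 'rV[R]_N) : x != 0 ->
  exists2 u, mdot u u = 1 & forall y, bform H u u * mdot y y <= bform H y y.
Proof.
move=> x0; set S := [set y : 'rV[R]_N | enorm y = 1].
have normalize y : y != 0 -> S ((enorm y)^-1 *: y).
  move=> /enorm_gt0 y0; rewrite /S /= enormZ ger0_norm ?invr_ge0 ?ltW //.
  by rewrite mulVf ?gt_eqF.
have Scompact : compact S.
  apply: (@subclosed_compact _ _ [set y | enorm (y - 0) <= 1]).
  - have := @continuous_enorm R 1 N; rewrite continuous_closedP.
    by move/(_ _ (closed_eq (y := 1))).
  - exact: compact_enorm_ball.
  - by move=> y /= Sy; rewrite subr0 Sy.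
have [u /set_mem Su umin] := compact_EVT_min (ex_intro S _ (normalize x x0))
  Scompact (continuous_subspaceT (@continuous_bform R N H)).
exists u; first by rewrite -sqr_enorm Su expr1n.
move=> y; have [->|y0] := eqVneq y 0.
  by rewrite -bform1 !bform0l mulr0.
have := umin _ (mem_set (normalize y y0)).
by rewrite bformZZ -sqr_enorm exprVn mulrC ler_pdivlMr // exprn_gt0 // enorm_gt0.
Qed.

Lemma bform_ge_min_eigenvalue (lam : R) : H^T = H ->
  (forall mu, eigenvalue H mu -> lam <= mu) ->
  forall x, lam * mdot x x <= bform H x x.
Proof.
move=> HT lam_min x; have [->|x0] := eqVneq x 0.
  by rewrite -bform1 !bform0l mulr0.
have [u uu umin] := bform_min_on_sphere x0; set m0 := bform H u u.
(* H - m0 is positive semidefinite and its form vanishes at u. *)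
have u_eig : u *m H = m0 *: u.
  apply/eqP; rewrite -subr_eq0 -mul_mx_scalar -mulmxBr; apply/eqP.
  apply: bform_psd_kernel.
  - by rewrite linearB /= tr_scalar_mx HT.
  - by move=> y; rewrite bform_subscalar subr_ge0 umin.
  - by rewrite bform_subscalar uu mulr1 subrr.
have u0 : u != 0.
  by apply: contra_eq_neq uu => ->; rewrite -bform1 bform0l eq_sym oner_neq0.
have : lam <= m0 by apply: lam_min; apply/eigenvalueP; exists u.
by move/(ler_wpM2r (mdot_ge0 x))/le_trans; apply.
Qed.

End Rayleigh.

Lemma quadf_ge_min_eigenvalue (R : realType) (m p : nat) (H : 'M[R]_(m * p))
    (lam : R) :
  H^T = H -> (forall mu, eigenvalue H mu -> lam <= mu) ->
  forall u : 'M[R]_(m, p), lam * mdot u u <= quadf H u.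
Proof.
by move=> HT lam_min u; rewrite -mdot_mxvec; exact: bform_ge_min_eigenvalue.
Qed.

Lemma taylor_sphere_gt (R : realType) (m p : nat) (F : 'M[R]_(m, p) -> R)
    (w : 'M[R]_(m, p)) (r eps B lam : R) :
  0 < r -> enorm (grad F w) <= eps ->
  (forall u, enorm u = 1 -> `|lagrange_rem F w u r| <= B) ->
  (forall u, lam * mdot u u <= quadf (hess F w) u) ->
  6 * eps < r * (3 * lam - r * B) ->
  forall x, enorm (x - w) = r -> F w < F x.
Proof.
move=> r0 grad_le rem_le hess_ge margin x xr.
set u := r^-1 *: (x - w).
have u1 : enorm u = 1.
  by rewrite enormZ xr ger0_norm ?invr_ge0 ?ltW // mulVf ?gt_eqF.
have xE : x = w + r *: u by rewrite scalerA divff ?gt_eqF // scale1r addrC subrK.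
set g := mdot (grad F w) u; set q := quadf (hess F w) u.
set Rem := lagrange_rem F w u r.
have g_ge : - eps <= g.
  have := ler_mdot_enorm (grad F w) u; rewrite -/g u1 mulr1 ler_norml.
  by case/andP => ? _; lra.
have q_ge : lam <= q by have := hess_ge u; rewrite -sqr_enorm u1 expr1n mulr1.
have Rem_ge : - B <= Rem by have := rem_le u u1; rewrite ler_norml => /andP[].
have expand : F x - F w = r * g + 2^-1 * r ^+ 2 * q + r ^+ 3 / 6 * Rem.
  by rewrite /Rem /lagrange_rem -xE -/g -/q; field; rewrite gt_eqF.
have h1 : r * - eps <= r * g by rewrite ler_pM2l.
have h2 : r ^+ 2 * lam <= r ^+ 2 * q by rewrite ler_pM2l ?exprn_gt0.
have h3 : r ^+ 3 * - B <= r ^+ 3 * Rem by rewrite ler_pM2l ?exprn_gt0.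
have h4 : 0 < r * (r * (3 * lam - r * B) - 6 * eps) by rewrite mulr_gt0 ?subr_gt0.
rewrite -subr_gt0 expand; move: h1 h2 h3 h4; rewrite !exprS expr0 !mulr1.
lra.
Qed.

Lemma smaller_root_margin (R : rcfType) (lam B eps : R) :
  0 < lam -> 0 < B -> 0 < eps -> 0 <= 9 * lam ^+ 2 - 25 * B * eps ->
  let r := (3 * lam - Num.sqrt (9 * lam ^+ 2 - 25 * B * eps)) / (2 * B) in
  0 < r /\ 6 * eps < r * (3 * lam - r * B).
Proof.
move=> lam0 B0 eps0 D0; set S := Num.sqrt _ => r.
have S0 : 0 <= S := sqrtr_ge0 _.
have S2 : S ^+ 2 = 9 * lam ^+ 2 - 25 * B * eps := sqr_sqrtr D0.
have S_lt : S < 3 * lam by nra.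
have rB : r * (2 * B) = 3 * lam - S by rewrite /r divfK // gt_eqF // mulr_gt0.
(* r is the smaller root of B r^2 - 3 lam r + 25 eps / 4. *)
have -> : r * (3 * lam - r * B) = 25 / 4 * eps.
  apply: (@mulfI _ (4 * B)); first by rewrite gt_eqF // mulr_gt0.
  transitivity (6 * lam * (r * (2 * B)) - (r * (2 * B)) ^+ 2); first by ring.
  by rewrite rB; transitivity (9 * lam ^+ 2 - S ^+ 2); [ring | rewrite S2; field].
split; last by lra.
by rewrite /r divr_gt0 ?subr_gt0 // mulr_gt0.
Qed.

Theorem lemma1 (R : realType) (k n : nat) (v : 'M[R]_(k, k))
  (w : 'M[R]_(n, k)) (alpha eps B lam : R) :
  v *m v^T = 1%:M ->
  0 < alpha ->
  (exists U : set 'M[R]_(n, k),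
     [/\ open U, (forall x, enorm (x - w) <= alpha -> U x)
       & thrice_diff_on (Fobj v) U]) ->
  0 < eps -> 0 < B ->
  enorm (grad (Fobj v) w) <= eps ->
  (forall (t : R) (u : 'M[R]_(n, k)), 0 < t <= alpha -> enorm u = 1 ->
     `|lagrange_rem (Fobj v) w u t| <= B) ->
  eigenvalue (hess (Fobj v) w) lam ->
  (forall mu, eigenvalue (hess (Fobj v) w) mu -> lam <= mu) ->
  0 < lam ->
  0 <= 9 * lam ^+ 2 - 25 * B * eps ->
  (3 * lam - Num.sqrt (9 * lam ^+ 2 - 25 * B * eps)) / (2 * B) < alpha ->
  exists ws : 'M[R]_(n, k),
    enorm (ws - w) <= (3 * lam - Num.sqrt (9 * lam ^+ 2 - 25 * B * eps)) / (2 * B)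
    /\ local_min (Fobj v) ws.
Proof.
move=> _ _ [U [oU ballU dU]] eps0 B0 grad_le rem_le _ lam_min lam0 D0.
have [r0 margin] := smaller_root_margin lam0 B0 eps0 D0.
set r := _ / _ in r0 margin * => r_alpha.
have inU x : enorm (x - w) <= r -> U x.
  by move=> xr; apply: ballU; exact: le_trans xr (ltW r_alpha).
have Uw : U w by apply: inU; rewrite subrr enorm0 ltW.
have hess_ge := quadf_ge_min_eigenvalue (hess_sym oU Uw dU) lam_min.
have Fc x : enorm (x - w) <= r -> {for x, continuous (Fobj v)}.
  by move=> /inU/dU[dF _ _]; exact: differentiable_continuous.
have rem_r u : enorm u = 1 -> `|lagrange_rem (Fobj v) w u r| <= B.
  by apply: rem_le; rewrite r0 ltW.
have [ws ws_r ws_min] :=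
  local_min_of_sphere_gt r0 Fc (taylor_sphere_gt r0 grad_le rem_r hess_ge margin).
by exists ws; split; first exact: ltW.
Qed.
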